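(* Let $\mathbf{A}$ be a finite algebra and $B$ a subuniverse of $\mathbf{A}$. There exists a function $f:\mathbb{N}\to\mathbb{N}$ such that for every $N$, if $\mathbf{A}$ has an $f(N)$-ary $B$-essential subpower, then there exist $b_1,b_2\in B$ and $a_1,\dots,a_N\in A$ such that the subuniverse of $\mathbf{A}^N$ generated by the $N$ tuples $(a_1,b_2,b_2,\dots,b_2)$, $(b_1,a_2,b_2,\dots,b_2)$, $(b_1,b_1,a_3,b_2,\dots,b_2)$, $\dots$, $(b_1,\dots,b_1,a_N)$ (the $i$-th tuple has $b_1$ in positions $<i$, $a_i$ in position $i$, and $b_2$ in positions $>i$) is $B$-essential.
   Context: $B$-essential: a subuniverse $R$ of $\mathbf{A}^k$ is $B$-essential if $R\cap B^k=\emptyset$ and for every $i\in\{1,\dots,k\}$, $\pi_{\widehat i}(R)\cap B^{k-1}\neq\emptyset$, where $\pi_{\widehat i}(R)$ is the projection of $R$ onto all coordinates except the $i$-th. A subpower is a subuniverse of a finite power of $\mathbf{A}$. *)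

From mathcomp Require Import all_boot.
From Stdlib Require Import ClassicalEpsilon.
Set Implicit Arguments. Unset Strict Implicit. Unset Printing Implicit Defensive.

(* An algebra A is given by a finite carrier T, an arbitrary index type I of
   basic operations, an arity function ar and the operations op.
   Elements of A^k are finite functions {ffun 'I_k -> T}. *)

Definition op_pow (T : finType) (I : Type) (ar : I -> nat)
  (op : forall i, ('I_(ar i) -> T) -> T) (k : nat) (i : I)
  (x : 'I_(ar i) -> {ffun 'I_k -> T}) : {ffun 'I_k -> T} :=
  [ffun c => op i (fun j => x j c)].

Definition subuniverse (T : finType) (I : Type) (ar : I -> nat)
  (op : forall i, ('I_(ar i) -> T) -> T) (k : nat)
  (R : {set {ffun 'I_k -> T}}) : Prop :=
  forall (i : I) (x : 'I_(ar i) -> {ffun 'I_k -> T}),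
    (forall j, x j \in R) -> op_pow op x \in R.

Definition subuniverse1 (T : finType) (I : Type) (ar : I -> nat)
  (op : forall i, ('I_(ar i) -> T) -> T) (B : {set T}) : Prop :=
  forall (i : I) (x : 'I_(ar i) -> T), (forall j, x j \in B) -> op i x \in B.

Definition pbool (P : Prop) : bool :=
  if excluded_middle_informative P then true else false.

Definition Sg (T : finType) (I : Type) (ar : I -> nat)
  (op : forall i, ('I_(ar i) -> T) -> T) (k : nat)
  (X : {set {ffun 'I_k -> T}}) : {set {ffun 'I_k -> T}} :=
  [set x | pbool (forall S : {set {ffun 'I_k -> T}},
                    subuniverse op S -> X \subset S -> x \in S)].

Definition B_essential (T : finType) (B : {set T}) (k : nat)
  (R : {set {ffun 'I_k -> T}}) : Prop :=
  (~ exists2 r, r \in R & forall c, r c \in B) /\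
  (forall i : 'I_k, exists2 r, r \in R & forall c, c != i -> r c \in B).

Definition stair_tuple (T : finType) (N : nat) (b1 b2 : T) (a : 'I_N -> T)
  (i : 'I_N) : {ffun 'I_N -> T} :=
  [ffun c : 'I_N => if (c < i)%N then b1 else if c == i then a i else b2].

From mathcomp Require Import all_boot zify.
From Stdlib Require Import ClassicalEpsilon FunctionalExtensionality.
Set Implicit Arguments. Unset Strict Implicit. Unset Printing Implicit Defensive.

(* Let R be a k-ary B-essential subpower and pick, for every coordinate i, a
   tuple r_i in R lying in B off i.  Colour an ordered pair of coordinates
   (i, j) by (r_i j, r_j i).  A greedy (end-homogeneous) selection followed by
   pigeonhole finds coordinates g_1, ..., g_N on which the colour of (g_s, g_t),
   s < t, is a constant (b2, b1); restricted to the g's, r_(g_t) is then the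
   t-th stair tuple with a_t = r_(g_t)(g_t).  Projecting onto the g's those
   tuples of R that lie in B on all other coordinates gives a subuniverse that
   contains the stair tuples and misses B^N, so the subuniverse they generate
   is B-essential.  Two extra coordinates make the colour class witness
   b1, b2 in B even when N < 2. *)

Section EndHomogeneous.
Variables (X C : eqType) (col : X -> X -> C).

Fixpoint end_homogeneous (s : seq (X * C)) : bool :=
  if s is p :: s' then all (fun q => col p.1 q.1 == p.2) s' && end_homogeneous s'
  else true.

Lemma end_homogeneous_filter (P : pred (X * C)) s :
  end_homogeneous s -> end_homogeneous (filter P s).
Proof.
elim: s => //= p s IH /andP[hp hs].
case: (P p) => /=; last exact: IH.
rewrite IH // andbT; apply/allP => q; rewrite mem_filter => /andP[_ qs].
exact: (allP hp).
Qed.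

Lemma end_homogeneous_nth d s i j :
  end_homogeneous s -> (i < j)%N -> (j < size s)%N ->
  col (nth d s i).1 (nth d s j).1 = (nth d s i).2.
Proof.
elim: s i j => [|p s IH] [|i] [|j] //= /andP[hp hs] ij js.
- by apply/eqP/(allP hp)/mem_nth.
- exact: IH.
Qed.

End EndHomogeneous.

Lemma pigeonhole_count (Y : Type) (C : finType) (F : Y -> C) (c0 : C) h
  (s : seq Y) :
  (#|C| * h <= size s)%N -> exists c, (h <= count (fun y => F y == c) s)%N.
Proof.
move=> hs.
have [c hc|small] := pickP (fun c => h <= count (fun y => F y == c) s)%N.
  by exists c.
have h_gt0 : (0 < h)%N by have := small c0; case: h {hs small}.
have count_sum : (\sum_(c : C) count (fun y => F y == c) s)%N = size s.
  elim: s {hs small} => [|y s IH] /=; first by rewrite big1.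
  rewrite big_split /= IH (bigD1 (F y)) //= eqxx big1 ?addn0 ?add1n //.
  by move=> c; rewrite eq_sym => /negbTE ->.
have : (size s <= #|C| * h.-1)%N.
  rewrite -count_sum -sum_nat_const; apply: leq_sum => c _.
  by rewrite -ltnS prednK // ltnNge small.
have : (0 < #|C|)%N by apply/card_gt0P; exists c0.
nia.
Qed.

(* Each step records the head x with the colour of its largest colour class
   among the rest and recurses on that class, losing a factor #|C|+1. *)
Lemma end_homogeneous_exists (X C : finType) (col : X -> X -> C) (c0 : C) m
  (A : seq X) :
  uniq A -> (#|C|.+1 ^ m <= size A)%N ->
  exists s, [/\ end_homogeneous col s, uniq (map fst s), size s = m &
               all (fun p => p.1 \in A) s].
Proof.
elim: m A => [|m IH] [|x A] //=; first by exists [::].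
  by rewrite leqn0 expn_eq0.
move=> /andP[xA uA] hA.
have hA' : (#|C| * #|C|.+1 ^ m <= size A)%N.
  rewrite -ltnS; apply: leq_trans hA; rewrite expnS mulSn -add1n leq_add2r.
  by rewrite expn_gt0.
have [c hc] := pigeonhole_count (col x) c0 hA'.
have := IH [seq y <- A | col x y == c] (filter_uniq _ uA).
rewrite size_filter => /(_ hc) [s [hom us size_s sA]].
have s_class q : q \in s -> col x q.1 = c /\ q.1 \in A.
  by move=> /(allP sA); rewrite mem_filter => /andP[/eqP].
exists ((x, c) :: s); split => /=.
- by rewrite hom andbT; apply/allP => q /s_class[-> _].
- rewrite us andbT; apply/mapP => -[q /s_class[_ qA] xq].
  by rewrite xq qA in xA.
- by rewrite size_s.
- rewrite inE eqxx /=; apply/allP => q /s_class[_ qA].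
  by rewrite inE qA orbT.
Qed.

Lemma ordered_ramsey (X C : finType) (col : X -> X -> C) N :
  (#|C|.+1 ^ (#|C| * N) <= #|X|)%N ->
  exists c (g : 'I_N -> X),
    injective g /\ forall s t : 'I_N, (s < t)%N -> col (g s) (g t) = c.
Proof.
move=> hX; have [x0 _] : exists x0 : X, true.
  by apply/card_gt0P; apply: leq_trans hX; rewrite expn_gt0.
have := end_homogeneous_exists col (col x0 x0) (enum_uniq (mem X)).
rewrite -cardE => /(_ _ hX) [s [hom us size_s _]].
have [c hc] : exists c, (N <= count (fun p => p.2 == c) s)%N.
  by apply: (pigeonhole_count snd (col x0 x0)); rewrite size_s.
pose L := [seq p <- s | p.2 == c].
have hom_L : end_homogeneous col L by apply: end_homogeneous_filter.
have uL : uniq (map fst L) by apply: subseq_uniq us; apply/map_subseq/filter_subseq.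
have ltL (t : 'I_N) : (t < size L)%N.
  by apply: leq_trans (ltn_ord t) _; rewrite size_filter.
pose d := (x0, c).
exists c, (fun t => (nth d L t).1); split.
- move=> s' t /eqP; rewrite -!(nth_map d x0) ?ltL //.
  by rewrite nth_uniq ?size_map ?ltL // => /eqP /val_inj.
- move=> s' t st; rewrite (end_homogeneous_nth d hom_L st (ltL t)).
  by have := mem_nth d (ltL s'); rewrite mem_filter => /andP[/eqP].
Qed.

Lemma pboolP (P : Prop) : reflect P (pbool P).
Proof. by rewrite /pbool; case: excluded_middle_informative => h; constructor. Qed.

Section Subpowers.
Variables (T : finType) (I : Type) (ar : I -> nat).
Variable op : forall i, ('I_(ar i) -> T) -> T.

Lemma in_SgP k (X : {set {ffun 'I_k -> T}}) x :
  reflect (forall S, subuniverse op S -> X \subset S -> x \in S) (x \in Sg op X).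
Proof. by rewrite inE; apply: pboolP. Qed.

Lemma sub_Sg k (X : {set {ffun 'I_k -> T}}) : X \subset Sg op X.
Proof. by apply/subsetP => x Xx; apply/in_SgP => S _ /subsetP; apply. Qed.

Lemma Sg_min k (X S : {set {ffun 'I_k -> T}}) :
  subuniverse op S -> X \subset S -> Sg op X \subset S.
Proof. by move=> SS XS; apply/subsetP => x /in_SgP; apply. Qed.

Variables (B : {set T}) (hB : subuniverse1 op B).

Lemma stair_tuple_offB N b1 b2 (a : 'I_N -> T) i c :
  b1 \in B -> b2 \in B -> c != i -> stair_tuple b1 b2 a i c \in B.
Proof. by move=> b1B b2B /negbTE ci; rewrite ffunE ci; case: ifP. Qed.

Definition pinned_proj k N (R : {set {ffun 'I_k -> T}}) (g : 'I_N -> 'I_k) :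
    {set {ffun 'I_N -> T}} :=
  [set x : {ffun 'I_N -> T} | [exists r in R,
     [forall t, r (g t) == x t] && [forall c, (c \notin codom g) ==> (r c \in B)]]].

Section PinnedProjection.
Variables (k N : nat) (R : {set {ffun 'I_k -> T}}) (g : 'I_N -> 'I_k).

Lemma pinned_projP (x : {ffun 'I_N -> T}) :
  reflect (exists2 r, r \in R &
             (forall t, r (g t) = x t) /\ forall c, c \notin codom g -> r c \in B)
          (x \in pinned_proj R g).
Proof.
rewrite inE; apply: (iffP existsP) => [[r /and3P[rR /forallP rx /forallP rB]]|].
  by exists r => //; split=> [t|c]; [apply/eqP/rx | apply/implyP/rB].
move=> [r rR [rx rB]]; exists r; rewrite rR /=.
by apply/andP; split; apply/forallP => y; [rewrite rx | apply/implyP/rB].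
Qed.

Lemma subuniverse_pinned_proj :
  subuniverse op R -> subuniverse op (pinned_proj R g).
Proof.
move=> hR i x xR.
have /fin_all_exists2[r rR rxB] : forall j, exists2 r, r \in R &
    (forall t, r (g t) = x j t) /\ forall c, c \notin codom g -> r c \in B.
  by move=> j; apply/pinned_projP.
apply/pinned_projP; exists (op_pow op r); first exact: hR.
split=> [t|c cg]; rewrite !ffunE.
  by congr (@op i _); apply: functional_extensionality => j; case: (rxB j) => ->.
by apply: hB => j; case: (rxB j) => _; apply.
Qed.

Lemma pinned_proj_avoid :
  ~ (exists2 r, r \in R & forall c, r c \in B) ->
  ~ (exists2 x, x \in pinned_proj R g & forall t, x t \in B).
Proof.
move=> noB [x /pinned_projP[r rR [rx rB]] xB]; apply: noB; exists r => // c.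
have [/codomP[t ->]|] := boolP (c \in codom g); [by rewrite rx | exact: rB].
Qed.

Variables (rr : 'I_k -> {ffun 'I_k -> T}) (b1 b2 : T).
Hypotheses (rrR : forall i, rr i \in R) (rrB : forall i j, j != i -> rr i j \in B).
Hypothesis rr_col : forall s t : 'I_N,
  (s < t)%N -> (rr (g s) (g t), rr (g t) (g s)) = (b2, b1).

Lemma stair_tuple_in_pinned_proj t :
  stair_tuple b1 b2 (fun s => rr (g s) (g s)) t \in pinned_proj R g.
Proof.
apply/pinned_projP; exists (rr (g t)) => //; split=> [s|c cg]; last first.
  by apply: rrB; apply: contra cg => /eqP ->; apply: codom_f.
rewrite ffunE; case: ltngtP => [st|ts|/val_inj ->]; last by rewrite eqxx.
- by case: (rr_col st).
- by case: eqP => [st|_]; [rewrite st ltnn in ts | case: (rr_col ts)].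
Qed.

Lemma B_essential_Sg_stairs :
  subuniverse op R -> ~ (exists2 r, r \in R & forall c, r c \in B) ->
  b1 \in B -> b2 \in B ->
  B_essential B
    (Sg op [set stair_tuple b1 b2 (fun s => rr (g s) (g s)) i | i : 'I_N]).
Proof.
move=> hR noB b1B b2B; set X := [set _ | _ : 'I_N].
have X_proj : X \subset pinned_proj R g.
  by apply/subsetP => _ /imsetP[t _ ->]; apply: stair_tuple_in_pinned_proj.
split.
- case=> x /(subsetP (Sg_min (subuniverse_pinned_proj hR) X_proj)) xR xB.
  by apply: (pinned_proj_avoid noB); exists x.
- move=> i; exists (stair_tuple b1 b2 (fun s => rr (g s) (g s)) i).
    by apply/(subsetP (sub_Sg X))/imset_f.
  by move=> c; apply: stair_tuple_offB.
Qed.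

End PinnedProjection.

End Subpowers.

Theorem lemma3p2 (T : finType) (I : Type) (ar : I -> nat)
  (op : forall i, ('I_(ar i) -> T) -> T) (B : {set T})
  (hB : subuniverse1 op B) :
  exists f : nat -> nat, forall N : nat,
    (exists R : {set {ffun 'I_(f N) -> T}}, subuniverse op R /\ B_essential B R) ->
    exists b1, exists b2, exists a : 'I_N -> T,
      [/\ b1 \in B, b2 \in B &
          B_essential B (Sg op [set stair_tuple b1 b2 a i | i : 'I_N])].
Proof.
pose K := #|{: T * T}|.
exists (fun N => K.+1 ^ (K * N.+2))%N => N [R [hR [noB essR]]].
have /fin_all_exists2[rr rrR rrB] := essR.
have := ordered_ramsey (fun i j => (rr i j, rr j i)) (N := N.+2).
rewrite card_ord => /(_ (leqnn _)) [[b2 b1] [g [g_inj g_col]]].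
have [b2B b1B] : b2 \in B /\ b1 \in B.
  have g_ne : g ord0 != g ord_max by apply: contraTneq isT => /g_inj.
  case: (g_col ord0 ord_max isT) => <- <-.
  by split; apply: rrB; rewrite // eq_sym.
pose h (t : 'I_N) := g (widen_ord (leqW (leqnSn N)) t).
exists b1, b2, (fun t => rr (h t) (h t)); split=> //.
by apply: (B_essential_Sg_stairs hB rrR rrB) => // s t st; apply: g_col.
Qed.
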